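(* Let $f: (\mathbb{R}^{+})^n \to (\mathbb{R}^{+})^n$ be homogeneous and monotone. If the associated graph $\mathcal{G}(f)$ is strongly connected, then $f$ has an eigenvector in $(\mathbb{R}^{+})^n$, i.e. there exist $x \in (\mathbb{R}^{+})^n$ and $\lambda \in \mathbb{R}^{+}$ with $f(x) = \lambda x$.
   Context: $\mathbb{R}^{+} = \{x \in \mathbb{R} : x > 0\}$. A map $f: (\mathbb{R}^{+})^n \to (\mathbb{R}^{+})^n$ is homogeneous if $f(\lambda x) = \lambda f(x)$ for all $\lambda \in \mathbb{R}^{+}$, $x \in (\mathbb{R}^{+})^n$, and monotone if $x \le y$ (componentwise) implies $f(x) \le f(y)$. For $u \in \mathbb{R}^{+}$ and $J \subseteq \{1,\dots,n\}$, $u_J \in (\mathbb{R}^{+})^n$ is the vector with $(u_J)_i = u$ if $i \in J$ and $(u_J)_i = 1$ otherwise. The associated graph $\mathcal{G}(f)$ is the directed graph on vertices $1,\dots,n$ with an edge from $i$ to $j$ iff $\lim_{u \to \infty} f_i(u_{\{j\}}) = \infty$. A directed graph is strongly connected if there is a directed path between any two distinct vertices. *)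

From mathcomp Require Import all_boot.
From Stdlib Require Import Reals.
Set Implicit Arguments.
Unset Strict Implicit.
Open Scope R_scope.

Definition pos_vec (n : nat) (x : 'I_n -> R) : Prop := forall i, 0 < x i.

(* f maps (R^+)^n to (R^+)^n; f is given as a total function whose behaviour
   outside the positive orthant is irrelevant *)
Definition maps_pos (n : nat) (f : ('I_n -> R) -> ('I_n -> R)) : Prop :=
  forall x, pos_vec x -> pos_vec (f x).

Definition homogeneous (n : nat) (f : ('I_n -> R) -> ('I_n -> R)) : Prop :=
  forall (lam : R) (x : 'I_n -> R), 0 < lam -> pos_vec x ->
    forall i, f (fun j => lam * x j) i = lam * f x i.

Definition monotone (n : nat) (f : ('I_n -> R) -> ('I_n -> R)) : Prop :=
  forall x y : 'I_n -> R, pos_vec x -> pos_vec y ->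
    (forall i, x i <= y i) -> forall i, f x i <= f y i.

Definition u_single (n : nat) (u : R) (j : 'I_n) : 'I_n -> R :=
  fun k => if k == j then u else 1.

Definition graph_edge (n : nat) (f : ('I_n -> R) -> ('I_n -> R)) (i j : 'I_n) : Prop :=
  forall M : R, exists U : R, forall u : R, U < u ->
    M < f (u_single u j) i.

Inductive dpath (n : nat) (E : 'I_n -> 'I_n -> Prop) : 'I_n -> 'I_n -> Prop :=
  | dpath_edge i j : E i j -> dpath E i j
  | dpath_step i k j : E i k -> dpath E k j -> dpath E i j.

Definition strongly_connected (n : nat) (E : 'I_n -> 'I_n -> Prop) : Prop :=
  forall i j : 'I_n, i <> j -> dpath E i j.

From mathcomp Require Import all_boot.
From Stdlib Require Import Reals Lra Lia Psatz Classical FunctionalExtensionality.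
Open Scope R_scope.

(* Let lam be the infimum of the rates mu for which some positive x satisfies
   f x <= mu x.  Homogeneity and monotonicity make f continuous along monotone
   sequences of positive vectors, and strong connectivity of G(f) gives a
   Harnack inequality: every positive x with f x <= mu0 x satisfies
   x_j <= C x_k with C depending only on mu0.  For mu_m decreasing to lam, the
   componentwise infima of the normalized x with f x <= mu_m x increase to a
   positive U with f U <= lam U.  The iterates (f / lam)^m U decrease and never
   fall below U / 2: otherwise, as (1 - 1/(2m))^m >= 1/2, the iterates of
   f / nu for some nu < lam would return below U, and the minimum of finitely
   many of them would satisfy f y <= nu y.  By the Harnack inequality the
   iterates stay uniformly positive, and their limit is an eigenvector. *)

Lemma fin_forall_exists_swap (T : finType) (A : Type) (a0 : A) (join : A -> A -> A)
    (P : T -> A -> Prop) :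
  (forall t a b, P t a -> P t (join a b)) -> (forall t a b, P t b -> P t (join a b)) ->
  (forall t, exists a, P t a) -> exists a, forall t, P t a.
Proof.
move=> Pl Pr HP.
have [a Ha] : exists a, forall t, t \in enum T -> P t a.
{ elim: (enum T) => [|t s [a Ha]]; first by exists a0.
  have [b Hb] := HP t.
  exists (join a b) => u; rewrite in_cons => /orP [/eqP -> | Hu]; first exact: Pr.
  exact/Pl/Ha. }
by exists a => t; apply: Ha; rewrite mem_enum.
Qed.

Lemma argmin_exists {n : nat} (i0 : 'I_n) (x : 'I_n -> R) :
  exists a, forall k, x a <= x k.
Proof.
apply: (@fin_forall_exists_swap _ _ i0 (fun a b => if Rle_dec (x a) (x b) then a else b)
          (fun k a => x a <= x k)); last by move=> k; exists k; lra.
all: by move=> k a b /= h; case: (Rle_dec (x a) (x b)) => h' /=; lra.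
Qed.

Lemma glb_exists {E : R -> Prop} {b : R} :
  (forall x, E x -> b <= x) -> (exists x, E x) ->
  {m | (forall x, E x -> m <= x) /\ (forall l, (forall x, E x -> l <= x) -> l <= m)}.
Proof.
move=> Eb Ene.
have bnd : bound (fun r => E (- r)) by exists (- b) => r /Eb; lra.
have ne : exists r, E (- r) by case: Ene => x0 ?; exists (- x0); rewrite Ropp_involutive.
case: (completeness _ bnd ne) => M [ubM lubM]; exists (- M); split.
- move=> x Ex; have := ubM (- x); rewrite Ropp_involutive => /(_ Ex); lra.
- move=> l lbl; suff : M <= - l by lra.
  by apply: lubM => r /lbl; lra.
Qed.

Lemma Rdiv_le_iff (a b c : R) : 0 < c -> a / c <= b <-> a <= c * b.
Proof.
move=> c0; have ac : a = c * (a / c) by field; lra.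
split=> H; first by rewrite ac; apply: Rmult_le_compat_l; lra.
by apply: (Rmult_le_reg_l c) => //; rewrite -ac.
Qed.

Lemma le_of_le_scale (a b : R) :
  0 <= b -> (forall eps, 0 < eps -> a <= (1 + eps) * b) -> a <= b.
Proof.
move=> b0 Hab; apply: Rle_plus_epsilon => eps eps0.
have d0 : 0 < eps / (b + 1) by apply: Rdiv_lt_0_compat; lra.
have := Hab _ d0.
have -> : (1 + eps / (b + 1)) * b = b + eps - eps / (b + 1) by field; lra.
lra.
Qed.

Lemma bernoulli_ineq (t : R) (m : nat) : 0 <= t <= 1 -> 1 - INR m * t <= (1 - t) ^ m.
Proof.
move=> t01; elim: m => [|m IH]; first by rewrite /=; lra.
rewrite S_INR /=; have := pos_INR m; have : 0 <= (1 - t) ^ m by apply: pow_le; lra.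
nra.
Qed.

Section VectorSequences.

Context {n : nat}.

Lemma vec_glb {P : ('I_n -> R) -> Prop} {b : R} :
  (forall x, P x -> forall k, b <= x k) -> (exists x, P x) ->
  {z | (forall x, P x -> forall k, z k <= x k) /\
       (forall k l, (forall x, P x -> l <= x k) -> l <= z k)}.
Proof.
move=> Pb Pne.
have Eb k : forall r, (exists x, P x /\ r = x k) -> b <= r.
{ by move=> _ [x [Px ->]]; apply: Pb. }
have Ene k : exists r, exists x, P x /\ r = x k.
{ by case: Pne => x Px; exists (x k), x. }
exists (fun k => proj1_sig (glb_exists (Eb k) (Ene k))); split.
- move=> x Px k; case: glb_exists => /= zk [lb _].
  by apply: lb; exists x.
- move=> k l Hl; case: glb_exists => /= zk [_ glb].
  by apply: glb => _ [x [Px ->]]; apply: Hl.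
Qed.

Lemma Un_cv_fin_uniform {y : nat -> 'I_n -> R} {L : 'I_n -> R} :
  (forall k, Un_cv (fun m => y m k) (L k)) ->
  forall eps, 0 < eps ->
  exists N, forall k m, (N <= m)%coq_nat -> Rabs (y m k - L k) < eps.
Proof.
move=> cvL eps eps0.
apply: (@fin_forall_exists_swap _ _ O Nat.max) => [k N N' HN m Hm | k N N' HN m Hm | k].
- by apply: HN; lia.
- by apply: HN; lia.
- by have [N HN] := cvL k eps eps0; exists N => m /HN.
Qed.

Lemma decreasing_vec_cv {y : nat -> 'I_n -> R} {b : R} :
  (forall m k, y (S m) k <= y m k) -> (forall m k, b <= y m k) ->
  exists L, (forall m k, L k <= y m k) /\
    forall eps, 0 < eps -> exists N, forall k m, (N <= m)%coq_nat -> y m k <= L k + eps.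
Proof.
move=> ydec ylb.
have lb k : has_lb (fun m => y m k).
{ by exists (- b) => _ [m ->]; rewrite /opp_seq; have := ylb m k; lra. }
pose cv k := decreasing_cv _ (fun m => ydec m k) (lb k).
exists (fun k => proj1_sig (cv k)); split.
- by move=> m k; apply: decreasing_ineq (proj2_sig (cv k)) m => m'; apply: ydec.
- move=> eps eps0; have [N HN] := Un_cv_fin_uniform (fun k => proj2_sig (cv k)) _ eps0.
  by exists N => k m /(HN k) /Rabs_def2; lra.
Qed.

Lemma increasing_vec_cv {y : nat -> 'I_n -> R} {b : R} :
  (forall m k, y m k <= y (S m) k) -> (forall m k, y m k <= b) ->
  exists L, (forall m k, y m k <= L k) /\
    forall eps, 0 < eps -> exists N, forall k m, (N <= m)%coq_nat -> L k <= y m k + eps.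
Proof.
move=> yinc yub.
have ub k : has_ub (fun m => y m k) by exists b => _ [m ->]; apply: yub.
pose cv k := growing_cv _ (fun m => yinc m k) (ub k).
exists (fun k => proj1_sig (cv k)); split.
- by move=> m k; apply: growing_ineq (proj2_sig (cv k)) m => m'; apply: yinc.
- move=> eps eps0; have [N HN] := Un_cv_fin_uniform (fun k => proj2_sig (cv k)) _ eps0.
  by exists N => k m /(HN k) /Rabs_def2; lra.
Qed.

Fixpoint prefix_min (v : nat -> 'I_n -> R) (K : nat) : 'I_n -> R :=
  match K with
  | O => v O
  | S K => fun i => Rmin (prefix_min v K i) (v (S K) i)
  end.

Lemma prefix_min_le (v : nat -> 'I_n -> R) (K j : nat) i :
  (j <= K)%coq_nat -> prefix_min v K i <= v j i.
Proof.
elim: K j => [|K IH] j jK /=.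
- have -> : j = O by lia.
  exact: Rle_refl.
- case: (Nat.eq_dec j (S K)) => [->|jK']; first exact: Rmin_r.
  apply: Rle_trans (Rmin_l _ _) (IH _ _); lia.
Qed.

Lemma prefix_min_glb (v : nat -> 'I_n -> R) (K : nat) i w :
  (forall j, (j <= K)%coq_nat -> w <= v j i) -> w <= prefix_min v K i.
Proof.
elim: K => [|K IH] Hw /=; first by apply: Hw.
apply: Rmin_glb; last by apply: Hw.
by apply: IH => j jK; apply: Hw; lia.
Qed.

Lemma prefix_min_pos (v : nat -> 'I_n -> R) (K : nat) :
  (forall j, pos_vec (v j)) -> pos_vec (prefix_min v K).
Proof.
move=> vp; elim: K => [|K IH] i /=; first exact: vp.
exact: Rmin_pos (IH i) (vp _ i).
Qed.

End VectorSequences.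

Section HomogeneousMonotone.

Context {n : nat} (f : ('I_n -> R) -> ('I_n -> R)).
Hypotheses (f_pos : maps_pos f) (f_hom : homogeneous f) (f_mono : monotone f).

Definition super_eigen (mu : R) (x : 'I_n -> R) : Prop :=
  pos_vec x /\ forall i, f x i <= mu * x i.

Lemma f_le_scale {c : R} {x y : 'I_n -> R} : 0 < c -> pos_vec x -> pos_vec y ->
  (forall k, x k <= c * y k) -> forall i, f x i <= c * f y i.
Proof.
move=> c0 xp yp xy i; rewrite -(f_hom _ _ c0 yp i).
by apply: f_mono => // k; have := yp k; nra.
Qed.

Lemma super_eigen_le {mu nu : R} {x : 'I_n -> R} :
  super_eigen mu x -> mu <= nu -> super_eigen nu x.
Proof.
by move=> [xp fx] mu_nu; split=> // i; have := fx i; have := xp i; nra.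
Qed.

Lemma super_eigen_scale {mu c : R} {x : 'I_n -> R} :
  0 < c -> super_eigen mu x -> super_eigen mu (fun k => c * x k).
Proof.
move=> c0 [xp fx]; split=> [k | i]; first by have := xp k; nra.
by rewrite (f_hom _ _ c0 xp i); have := fx i; nra.
Qed.

Lemma super_eigen_rate_pos {mu : R} {x : 'I_n -> R} (i : 'I_n) :
  super_eigen mu x -> 0 < mu.
Proof.
by move=> [xp fx]; have := fx i; have := f_pos _ xp i; have := xp i; nra.
Qed.

Lemma super_eigen_exists : exists mu x, super_eigen mu x.
Proof.
have [M HM] : exists M, forall i, f (fun _ => 1) i <= M.
{ apply: (@fin_forall_exists_swap _ _ 0 Rmax) => [i a b | i a b | i].
  - by have := Rmax_l a b; lra.
  - by have := Rmax_r a b; lra.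
  - by exists (f (fun _ => 1) i); lra. }
by exists M, (fun _ => 1); split=> i; [lra | rewrite Rmult_1_r].
Qed.

Lemma super_eigen_glb (mu : R) (P : ('I_n -> R) -> Prop) (z : 'I_n -> R) :
  0 < mu -> pos_vec z -> (forall x, P x -> super_eigen mu x) ->
  (forall x, P x -> forall k, z k <= x k) ->
  (forall k l, (forall x, P x -> l <= x k) -> l <= z k) -> super_eigen mu z.
Proof.
move=> mu0 zp Psuper zlb zglb; split=> // k.
apply/(Rdiv_le_iff _ _ _ mu0); apply: zglb => x Px.
have [xp fx] := Psuper x Px; apply/(Rdiv_le_iff _ _ _ mu0).
exact: Rle_trans (f_mono _ _ zp xp (zlb x Px) k) (fx k).
Qed.

Lemma super_eigen_of_increasing (lam b B : R) (mu : nat -> R) (z : nat -> 'I_n -> R) :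
  0 < b -> (forall m, super_eigen (mu m) (z m)) ->
  (forall m k, z m k <= z (S m) k) -> (forall m k, b <= z m k <= B) ->
  (forall m m', (m <= m')%coq_nat -> mu m' <= mu m) ->
  (forall eps, 0 < eps -> exists m, mu m <= lam + eps) ->
  exists U, super_eigen lam U.
Proof.
move=> b0 zsuper zinc zbnd mu_dec mu_inf.
have [U [zU cvU]] := increasing_vec_cv zinc (fun m k => proj2 (zbnd m k)).
have Up : pos_vec U by move=> k; have := zU O k; have := zbnd O k; lra.
have fU_mu m k : f U k <= mu m * U k.
{ have mu0 := super_eigen_rate_pos k (zsuper m).
  apply: le_of_le_scale; first by have := Up k; nra.
  move=> eps eps0; have [N HN] := cvU (eps * b) (Rmult_lt_0_compat _ _ eps0 b0).
  pose m' := Nat.max m N; have [zp fz] := zsuper m'.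
  have Uz j : U j <= (1 + eps) * z m' j.
  { by have := HN j m' (Nat.le_max_r m N); have := zbnd m' j; nra. }
  have := f_le_scale (ltac:(lra) : 0 < 1 + eps) Up zp Uz k.
  have : mu m' * z m' k <= mu m * U k.
  { apply: Rmult_le_compat; last exact: zU.
    - exact: Rlt_le (super_eigen_rate_pos k (zsuper m')).
    - exact: Rlt_le (zp k).
    - exact: mu_dec (Nat.le_max_l m N). }
  by have := fz k; nra. }
exists U; split=> // k; apply: Rle_plus_epsilon => eps eps0.
have [m Hm] := mu_inf (eps / U k) (Rdiv_lt_0_compat _ _ eps0 (Up k)).
have : mu m * U k <= (lam + eps / U k) * U k.
{ by apply: Rmult_le_compat_r; [left; apply: Up |]. }
have -> : (lam + eps / U k) * U k = lam * U k + eps by field; have := Up k; lra.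
by have := fU_mu m k; lra.
Qed.

Definition fdiv (a : R) (x : 'I_n -> R) : 'I_n -> R := fun i => f x i / a.

Lemma iter_fdiv_pos {a : R} (m : nat) {x : 'I_n -> R} :
  0 < a -> pos_vec x -> pos_vec (Nat.iter m (fdiv a) x).
Proof.
move=> a0 xp; elim: m => [|m IH] //= i.
exact: Rdiv_lt_0_compat (f_pos _ IH i) a0.
Qed.

Lemma iter_fdiv_rescale {a b : R} (m : nat) {x : 'I_n -> R} :
  0 < a -> 0 < b -> pos_vec x ->
  forall i, Nat.iter m (fdiv b) x i = (a / b) ^ m * Nat.iter m (fdiv a) x i.
Proof.
move=> a0 b0 xp; elim: m => [|m IH] i; first by rewrite /=; ring.
have c0 : 0 < (a / b) ^ m by apply: pow_lt; apply: Rdiv_lt_0_compat.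
change (fdiv b (Nat.iter m (fdiv b) x) i =
        (a / b) ^ m.+1 * fdiv a (Nat.iter m (fdiv a) x) i).
rewrite (functional_extensionality _ _ IH) {1}/fdiv.
rewrite (f_hom _ _ c0 (iter_fdiv_pos m a0 xp) i) /fdiv /=; field; lra.
Qed.

(* The componentwise minimum of x, F x, ..., F^K x with F = f / mu is mapped
   below itself by F. *)
Lemma super_eigen_of_iter_le {mu : R} {K : nat} {x : 'I_n -> R} :
  0 < mu -> pos_vec x -> (forall i, Nat.iter (S K) (fdiv mu) x i <= x i) ->
  exists y, super_eigen mu y.
Proof.
move=> mu0 xp HK.
pose v j := Nat.iter j (fdiv mu) x.
have vp j : pos_vec (v j) by apply: iter_fdiv_pos.
have yp := prefix_min_pos v K vp.
exists (prefix_min v K); split=> // i.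
apply/(Rdiv_le_iff _ _ _ mu0); apply: prefix_min_glb => j jK.
have below_next j' : (j' <= K)%coq_nat -> f (prefix_min v K) i / mu <= v (S j') i.
{ move=> j'K; apply: Rmult_le_compat_r; first by left; apply: Rinv_0_lt_compat.
  by apply: f_mono => // k; apply: prefix_min_le. }
case: j jK => [_ | j jK]; last by apply: below_next; lia.
exact: Rle_trans (below_next K (le_n K)) (HK i).
Qed.

Section Iterates.

Context {lam : R} {U : 'I_n -> R}.
Hypotheses (lam_pos : 0 < lam) (U_super : super_eigen lam U).

Let y (m : nat) : 'I_n -> R := Nat.iter m (fdiv lam) U.

Lemma iter_fdiv_decreasing (m : nat) (k : 'I_n) : y (S m) k <= y m k.
Proof.
have [Up fU] := U_super.
have yp j : pos_vec (y j) := iter_fdiv_pos j lam_pos Up.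
have yS j i : y (S j) i = f (y j) i / lam by [].
elim: m k => [|m IH] k; rewrite yS.
- by apply/Rdiv_le_iff => //; apply: fU.
- apply: Rmult_le_compat_r; first by left; apply: Rinv_0_lt_compat.
  exact: f_mono _ _ (yp m.+1) (yp m) IH k.
Qed.

Lemma iter_fdiv_super (m : nat) : super_eigen lam (y m).
Proof.
split=> [|k]; first exact: (iter_fdiv_pos m lam_pos (proj1 U_super)).
exact/(Rdiv_le_iff _ _ _ lam_pos)/(iter_fdiv_decreasing m k).
Qed.

End Iterates.

Lemma iter_fdiv_not_halved {lam : R} {U : 'I_n -> R} (m : nat) :
  0 < lam -> (forall nu x, super_eigen nu x -> lam <= nu) -> super_eigen lam U ->
  ~ (forall k, Nat.iter m (fdiv lam) U k <= U k / 2).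
Proof.
move=> lam0 lam_min sU halved; have Up := proj1 sU.
have {m halved} [K halvedK] : exists K, forall k, Nat.iter (S K) (fdiv lam) U k <= U k / 2.
{ by exists m => k; apply: Rle_trans (iter_fdiv_decreasing lam0 sU m k) (halved k). }
pose t := / (2 * INR (S K)).
have K1 : 1 <= INR (S K) by rewrite S_INR; have := pos_INR K; lra.
have t0 : 0 < t by apply: Rinv_0_lt_compat; lra.
have Kt : INR (S K) * t = / 2 by rewrite /t; field; lra.
have t_half : t <= / 2 by rewrite -Kt; nra.
pose nu := lam * (1 - t).
have nu0 : 0 < nu by rewrite /nu; nra.
have ratio : (lam / nu) ^ S K <= 2.
{ have := bernoulli_ineq t (S K) (conj (Rlt_le _ _ t0) (ltac:(lra) : t <= 1)).
  rewrite Kt (_ : lam / nu = / (1 - t)) ?pow_inv; last by rewrite /nu; field; nra.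
  move=> H; rewrite (_ : 2 = / / 2); last by field.
  apply: Rinv_le_contravar; lra. }
have iter_le i : Nat.iter (S K) (fdiv nu) U i <= U i.
{ rewrite (iter_fdiv_rescale (S K) lam0 nu0 Up i).
  have := iter_fdiv_pos (S K) lam0 Up i; have := halvedK i; have := Up i.
  have : 0 < (lam / nu) ^ S K by apply: pow_lt; apply: Rdiv_lt_0_compat.
  nra. }
have [x sx] := super_eigen_of_iter_le nu0 Up iter_le.
by have := lam_min nu x sx; rewrite /nu; nra.
Qed.

Lemma eigenvector_of_bounded_iterates {lam delta : R} {U : 'I_n -> R} :
  0 < lam -> super_eigen lam U -> 0 < delta ->
  (forall m k, delta <= Nat.iter m (fdiv lam) U k) ->
  exists L, pos_vec L /\ forall i, f L i = lam * L i.
Proof.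
move=> lam0 sU delta0 ylb.
pose y m := Nat.iter m (fdiv lam) U.
have {}ylb m k : delta <= y m k := ylb m k.
have yp m : pos_vec (y m) := proj1 (iter_fdiv_super lam0 sU m).
have yS m i : f (y m) i = lam * y (S m) i by rewrite /y /= /fdiv; field; lra.
have [L [Ly cvL]] := @decreasing_vec_cv _ y _ (iter_fdiv_decreasing lam0 sU) ylb.
have Llb k : delta <= L k.
{ apply: Rle_plus_epsilon => eps /cvL [N HN].
  by have := HN k N (le_n N); have := ylb N k; lra. }
have Lp : pos_vec L by move=> k; have := Llb k; lra.
exists L; split=> // i; apply: Rle_antisym.
- apply/(Rdiv_le_iff _ _ _ lam0); apply: Rle_plus_epsilon => eps /cvL [N HN].
  have := HN i N.+1 (le_S _ _ (le_n N)).
  have : f L i / lam <= y N.+1 i.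
  { apply: Rmult_le_compat_r; first by left; apply: Rinv_0_lt_compat.
    by apply: f_mono => // k; apply: Ly. }
  exact: Rle_trans.
- apply: le_of_le_scale; first by have := f_pos _ Lp i; lra.
  move=> eps eps0; have [N HN] := cvL (eps * delta) (Rmult_lt_0_compat _ _ eps0 delta0).
  have yL k : y N k <= (1 + eps) * L k by have := HN k N (le_n N); have := Llb k; nra.
  have := f_le_scale (ltac:(lra) : 0 < 1 + eps) (yp N) Lp yL i.
  have : lam * L i <= lam * y N.+1 i by apply: Rmult_le_compat_l; [lra | apply: Ly].
  have := yS N i; lra.
Qed.

(* With u := x_j / m, x dominates m u_{j}, so f_i(u_{j}) <= mu0 B bounds u
   through the edge i -> j. *)
Lemma edge_harnack {mu0 : R} {i j : 'I_n} : 0 <= mu0 -> graph_edge f i j ->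
  forall B, exists C, forall x m, super_eigen mu0 x -> 0 < m -> (forall k, m <= x k) ->
    x i <= B * m -> x j <= C * m.
Proof.
move=> mu0_ge0 ij B; have [U HU] := ij (mu0 * B).
exists U => x m [xp fx] m0 mx xi.
have u0 : 0 < x j / m by apply: Rdiv_lt_0_compat.
have xj : x j = m * (x j / m) by field; lra.
rewrite xj (Rmult_comm U); apply: Rmult_le_compat_l; first lra.
apply: Rnot_lt_le => /HU Hu.
have up : pos_vec (u_single (x j / m) j).
{ by move=> k; rewrite /u_single; case: eqP => _; lra. }
have : m * f (u_single (x j / m) j) i <= f x i.
{ rewrite -(f_hom _ _ m0 up i); apply: f_mono => // k; first by have := up k; nra.
  by rewrite /u_single; case: eqP => [-> | _]; [lra | rewrite Rmult_1_r]. }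
have := Rmult_lt_compat_l m _ _ m0 Hu.
have : mu0 * x i <= mu0 * (B * m) by apply: Rmult_le_compat_l.
have := fx i; lra.
Qed.

Lemma path_harnack {mu0 : R} {a j : 'I_n} : 0 <= mu0 -> dpath (graph_edge f) a j ->
  forall B, exists C, forall x m, super_eigen mu0 x -> 0 < m -> (forall k, m <= x k) ->
    x a <= B * m -> x j <= C * m.
Proof.
move=> mu0_ge0; elim=> [i {}j ij | i k {}j ik _ IH] B; first exact: edge_harnack.
have [C1 HC1] := edge_harnack mu0_ge0 ik B; have [C2 HC2] := IH C1.
by exists C2 => x m sx m0 mx xi; apply: HC2 => //; apply: HC1.
Qed.

Hypothesis f_sc : strongly_connected (graph_edge f).

Lemma harnack {mu0 : R} : 0 <= mu0 ->
  exists C, 1 <= C /\ forall x, super_eigen mu0 x -> forall j k, x j <= C * x k.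
Proof.
move=> mu0_ge0.
have [C HC] : exists C, forall p : 'I_n * 'I_n, forall x m, super_eigen mu0 x -> 0 < m ->
    (forall k, m <= x k) -> x p.1 <= m -> x p.2 <= C * m.
{ apply: (@fin_forall_exists_swap _ _ 1 Rmax) => [p C C' HC | p C C' HC | [a j]].
  - move=> x m sx m0 mx xa; have := HC x m sx m0 mx xa; have := Rmax_l C C'; nra.
  - move=> x m sx m0 mx xa; have := HC x m sx m0 mx xa; have := Rmax_r C C'; nra.
  - case: (eqVneq a j) => [<- | aj]; first by exists 1 => x m _ _ _ /=; lra.
    have [C HC] := path_harnack mu0_ge0 (f_sc _ _ (elimN eqP aj)) 1.
    exists C => x m sx m0 mx /= xa; apply: HC => //; lra. }
exists (Rmax C 1); split=> [|x sx j k]; first exact: Rmax_r.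
have [a xa] := argmin_exists j x.
have := HC (a, j) x (x a) sx (proj1 sx a) xa (Rle_refl _) => /= xj.
have := Rmax_l C 1; have := Rmax_r C 1; have := xa k; have := proj1 sx a; nra.
Qed.

Lemma iter_fdiv_lower_bound (i0 : 'I_n) {lam : R} {U : 'I_n -> R} :
  0 < lam -> (forall nu x, super_eigen nu x -> lam <= nu) -> super_eigen lam U ->
  exists delta, 0 < delta /\ forall m k, delta <= Nat.iter m (fdiv lam) U k.
Proof.
move=> lam0 lam_min sU.
have [C [C1 HC]] := harnack (Rlt_le _ _ lam0).
have U0 := proj1 sU i0.
exists (U i0 / (2 * C * C)); split; first by apply: Rdiv_lt_0_compat; nra.
move=> m k; pose y := Nat.iter m (fdiv lam) U.
have [j Uj] : exists j, U j / 2 < y j.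
{ apply: NNPP => none; apply: (iter_fdiv_not_halved m lam0 lam_min sU) => j.
  by apply: Rnot_lt_le => Uj; apply: none; exists j. }
have := HC _ (iter_fdiv_super lam0 sU m) j k; have := HC U sU i0 j.
move=> Ui0 yj; apply/(Rdiv_le_iff _ _ _ (ltac:(nra) : 0 < 2 * C * C)).
rewrite -/y in yj *; nra.
Qed.

Lemma super_eigen_at_inf (i0 : 'I_n) {lam : R} :
  0 <= lam -> (forall mu, lam < mu -> exists x, super_eigen mu x) ->
  exists U, super_eigen lam U.
Proof.
move=> lam0 above; have [C [C1 HC]] := harnack (ltac:(lra) : 0 <= lam + 1).
pose mu m := lam + / INR (S m).
have inv_bnd m : 0 < / INR (S m) <= 1.
{ have : 1 <= INR (S m) by rewrite S_INR; have := pos_INR m; lra.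
  by move=> m1; split; [apply: Rinv_0_lt_compat | rewrite -Rinv_1; apply: Rinv_le_contravar]; lra. }
have mu_gt m : lam < mu m by have := inv_bnd m; rewrite /mu; lra.
have mu_le m : mu m <= lam + 1 by have := inv_bnd m; rewrite /mu; lra.
pose P m x := super_eigen (mu m) x /\ x i0 = 1.
have P_lb m x : P m x -> forall k, / C <= x k.
{ move=> [sx x1] k; have := HC x (super_eigen_le sx (mu_le m)) i0 k.
  rewrite x1 => H; apply: (Rmult_le_reg_l C); first lra.
  by rewrite Rinv_r; lra. }
have P_ne m : exists x, P m x.
{ have [x [xp fx]] := above (mu m) (mu_gt m).
  have x0 := xp i0.
  exists (fun k => / x i0 * x k); split; last by field; lra.
  by apply: super_eigen_scale; [apply: Rinv_0_lt_compat | split]. }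
pose z m := proj1_sig (vec_glb (P_lb m) (P_ne m)).
have z_lb m : forall x, P m x -> forall k, z m k <= x k.
{ exact: proj1 (proj2_sig (vec_glb (P_lb m) (P_ne m))). }
have z_glb m : forall k l, (forall x, P m x -> l <= x k) -> l <= z m k.
{ exact: proj2 (proj2_sig (vec_glb (P_lb m) (P_ne m))). }
have z_ge m k : / C <= z m k by apply: z_glb => x /P_lb.
have C0 : 0 < / C by apply: Rinv_0_lt_compat; lra.
have zp m : pos_vec (z m) by move=> k; have := z_ge m k; lra.
have z_super m : super_eigen (mu m) (z m).
{ apply: (super_eigen_glb (mu m) (P m) (z m) _ (zp m) _ (z_lb m) (z_glb m)).
  - by have := mu_gt m; lra.
  - by move=> x []. }
have mu_dec m m' : (m <= m')%coq_nat -> mu m' <= mu m.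
{ move=> mm'; apply: Rplus_le_compat_l; apply: Rinv_le_contravar.
  - by apply: lt_0_INR; lia.
  - by apply: le_INR; lia. }
apply: (super_eigen_of_increasing lam (/ C) C mu z C0 z_super) => //.
- move=> m k; apply: z_glb => x [sx x1]; apply: z_lb; split=> //.
  exact: super_eigen_le sx (mu_dec _ _ (le_S _ _ (le_n m))).
- move=> m k; split=> //; have [x Px] := P_ne m.
  have := z_lb m x Px i0; rewrite (proj2 Px).
  have := HC (z m) (super_eigen_le (z_super m) (mu_le m)) k i0; have := z_ge m i0; nra.
- move=> eps eps0; have [N [HN N0]] := archimed_cor1 eps eps0; exists N.
  have : / INR (S N) <= / INR N.
  { by apply: Rinv_le_contravar; [apply: lt_0_INR; lia | rewrite S_INR; lra]. }
  by rewrite /mu; lra.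
Qed.

Lemma eigenvector_exists (i0 : 'I_n) :
  exists (x : 'I_n -> R) (lam : R), pos_vec x /\ 0 < lam /\ forall i, f x i = lam * x i.
Proof.
pose E mu := exists x, super_eigen mu x.
have E_ge0 mu : E mu -> 0 <= mu by case=> x /(super_eigen_rate_pos i0); lra.
have E_ne : exists mu, E mu by have [mu [x sx]] := super_eigen_exists; exists mu, x.
case: (glb_exists E_ge0 E_ne) => lam [lam_lb lam_glb].
have lam_min nu x : super_eigen nu x -> lam <= nu by move=> sx; apply: lam_lb; exists x.
have above mu : lam < mu -> E mu.
{ move=> lam_mu; apply: NNPP => notE; suff : mu <= lam by lra.
  apply: lam_glb => nu [x sx]; apply: Rnot_lt_le => nu_mu; apply: notE.
  by exists x; apply: super_eigen_le sx (Rlt_le _ _ nu_mu). }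
have [U sU] := super_eigen_at_inf i0 (lam_glb 0 E_ge0) above.
have lam0 := super_eigen_rate_pos i0 sU.
have [delta [delta0 ylb]] := iter_fdiv_lower_bound i0 lam0 lam_min sU.
have [L [Lp fL]] := eigenvector_of_bounded_iterates lam0 sU delta0 ylb.
by exists L, lam.
Qed.

End HomogeneousMonotone.

Theorem theorem2 (n : nat) (f : ('I_n -> R) -> ('I_n -> R)) :
  maps_pos f -> homogeneous f -> monotone f ->
  strongly_connected (graph_edge f) ->
  exists (x : 'I_n -> R) (lam : R),
    pos_vec x /\ 0 < lam /\ forall i, f x i = lam * x i.
Proof.
case: n f => [|n] f f_pos f_hom f_mono f_sc.
- by exists (fun _ => 1), 1; split; [case | split; [lra | case]].
- exact: eigenvector_exists f_pos f_hom f_mono f_sc ord0.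
Qed.
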